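(* Let $X$ be a space, $E$ a Banach space, $p\in(1,\infty)$ and $q$ its conjugate index ($1/p+1/q=1$). Let $\{\phi_i\}_{i\in I}$ be a metric $p$-partition of unity on $X$, let $J\subseteq I$, and let $\{B_i\}_{i\in J}$ be bounded operators on $\ell^p_E(X)$ with $M:=\sup_{i\in J}\|B_i\|<\infty$. Then the sum $\sum_{i\in J}\phi_i^{p/q}B_i\phi_i$ converges strongly to a band operator on $\ell^p_E(X)$ of norm at most $M$.
   Context: A *space* is a metric space $(X,d)$ that is strongly discrete (the set $\{d(x,y):x,y\in X\}$ is a discrete subset of $\mathbb{R}$) and has bounded geometry (for every $r>0$, $\sup_{x\in X}|B(x;r)|<\infty$, where $B(x;r)=\{y\in X: d(x,y)\le r\}$). $\ell^p_E(X)$ is the Banach space of $p$-summable functions $X\to E$; a bounded function $\phi:X\to\mathbb{C}$ acts on it by pointwise multiplication. A band operator is a bounded operator whose matrix entries $A_{xy}\in\mathcal{L}(E)$ (defined by $A_{xy}e=(A(\delta_ye))(x)$) vanish whenever $d(x,y)$ exceeds some fixed bound. A metric $p$-partition of unity on $X$ is a family $\{\phi_i:X\to[0,1]\}_{i\in I}$ such that (i) there is $N\in\mathbb{N}$ such that for each $x$ at most $N$ of the numbers $\phi_i(x)$ are nonzero; (ii) $\sup_i\operatorname{diam}\{x:\phi_i(x)\neq0\}<\infty$; (iii) $\sum_{i\in I}\phi_i(x)^p=1$ for all $x\in X$. *)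

From Stdlib Require Import Reals List ClassicalDescription.
Open Scope R_scope.

Record Cplx := mkC { Cre : R; Cim : R }.
Definition Cadd (a b : Cplx) : Cplx := mkC (Cre a + Cre b) (Cim a + Cim b).
Definition Cmul (a b : Cplx) : Cplx :=
  mkC (Cre a * Cre b - Cim a * Cim b) (Cre a * Cim b + Cim a * Cre b).
Definition Cabs (a : Cplx) : R := sqrt (Cre a ^ 2 + Cim a ^ 2).
Definition RtoC (r : R) : Cplx := mkC r 0.

Record CBanach := {
  bcar :> Type;
  badd : bcar -> bcar -> bcar;
  bzero : bcar;
  bopp : bcar -> bcar;
  bscal : Cplx -> bcar -> bcar;
  bnorm : bcar -> R;
  badd_assoc : forall u v w, badd u (badd v w) = badd (badd u v) w;
  badd_comm : forall u v, badd u v = badd v u;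
  badd_zero : forall u, badd u bzero = u;
  badd_opp : forall u, badd u (bopp u) = bzero;
  bscal_addv : forall a u v, bscal a (badd u v) = badd (bscal a u) (bscal a v);
  bscal_adds : forall a b u, bscal (Cadd a b) u = badd (bscal a u) (bscal b u);
  bscal_mul : forall a b u, bscal (Cmul a b) u = bscal a (bscal b u);
  bscal_one : forall u, bscal (RtoC 1) u = u;
  bnorm_eq0 : forall u, bnorm u = 0 -> u = bzero;
  bnorm_scal : forall a u, bnorm (bscal a u) = Cabs a * bnorm u;
  bnorm_triangle : forall u v, bnorm (badd u v) <= bnorm u + bnorm v;
  bcomplete : forall s : nat -> bcar,
    (forall eps, 0 < eps -> exists N, forall m n, (N <= m)%nat -> (N <= n)%nat ->
        bnorm (badd (s m) (bopp (s n))) < eps) ->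
    exists l, forall eps, 0 < eps -> exists N, forall n, (N <= n)%nat ->
        bnorm (badd (s n) (bopp l)) < eps
}.
Arguments badd {_}. Arguments bzero {_}. Arguments bopp {_}.
Arguments bscal {_}. Arguments bnorm {_}.

(* x^a for x >= 0, a > 0, with the convention 0^a = 0 *)
Definition rpow (x a : R) : R := if Rlt_dec 0 x then Rpower x a else 0.

Definition Rsum_list (l : list R) : R := fold_right Rplus 0 l.

(* supremum of a set of reals (0 if empty or unbounded) *)
Definition Rsup (P : R -> Prop) : R :=
  match excluded_middle_informative (bound P /\ exists x, P x) with
  | left h => proj1_sig (completeness P (proj1 h) (proj2 h))
  | right _ => 0
  end.

Definition ball {X : Type} (d : X -> X -> R) (x : X) (r : R) : X -> Prop :=
  fun y => d x y <= r.

Definition is_space (X : Type) (d : X -> X -> R) : Prop :=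
  (forall x y, 0 <= d x y) /\
  (forall x y, d x y = 0 <-> x = y) /\
  (forall x y, d x y = d y x) /\
  (forall x y z, d x z <= d x y + d y z) /\
  (* strongly discrete: every distance value is isolated in the set of distances *)
  (forall x y, exists eps, 0 < eps /\
      forall x' y', Rabs (d x' y' - d x y) < eps -> d x' y' = d x y) /\
  (* bounded geometry: for every r > 0 the balls B(x;r) have uniformly bounded size *)
  (forall r, 0 < r -> exists N : nat, forall x, exists l : list X,
      (length l <= N)%nat /\ forall y, ball d x r y -> In y l).

Definition metric_p_partition (X : Type) (d : X -> X -> R) (p : R)
    (I : Type) (phi : I -> X -> R) : Prop :=
  (forall i x, 0 <= phi i x <= 1) /\
  (exists N : nat, forall x, exists l : list I,
      (length l <= N)%nat /\ forall i, phi i x <> 0 -> In i l) /\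
  (exists D, forall i x y, phi i x <> 0 -> phi i y <> 0 -> d x y <= D) /\
  (* (iii) sum_i phi_i(x)^p = 1 (the sum has finitely many nonzero terms by (i)) *)
  (forall x (l : list I), NoDup l -> (forall i, phi i x <> 0 -> In i l) ->
      Rsum_list (map (fun i => rpow (phi i x) p) l) = 1).

Section Lp.
Context {E : CBanach} {X : Type}.

Definition fadd (f g : X -> E) : X -> E := fun x => badd (f x) (g x).
Definition fsub (f g : X -> E) : X -> E := fun x => badd (f x) (bopp (g x)).
Definition fscal (c : Cplx) (f : X -> E) : X -> E := fun x => bscal c (f x).
Definition mult_op (g : X -> R) (f : X -> E) : X -> E :=
  fun x => bscal (RtoC (g x)) (f x).

Definition lp_sums (p : R) (f : X -> E) : R -> Prop :=
  fun s => exists l : list X, NoDup l /\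
     s = Rsum_list (map (fun x => rpow (bnorm (f x)) p) l).

Definition in_lp (p : R) (f : X -> E) : Prop := bound (lp_sums p f).

Definition lp_norm (p : R) (f : X -> E) : R := rpow (Rsup (lp_sums p f)) (/ p).

Definition is_bounded_op (p : R) (T : (X -> E) -> (X -> E)) : Prop :=
  (forall f, in_lp p f -> in_lp p (T f)) /\
  (forall f g, in_lp p f -> in_lp p g -> forall x, T (fadd f g) x = badd (T f x) (T g x)) /\
  (forall c f, in_lp p f -> forall x, T (fscal c f) x = bscal c (T f x)) /\
  (exists C, forall f, in_lp p f -> lp_norm p (T f) <= C * lp_norm p f).

Definition op_norm_le (p : R) (T : (X -> E) -> (X -> E)) (M : R) : Prop :=
  forall f, in_lp p f -> lp_norm p (T f) <= M * lp_norm p f.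

Definition delta (d : X -> X -> R) (y : X) (e : E) : X -> E :=
  fun x => if Req_EM_T (d x y) 0 then e else bzero.

(* band operator: matrix entries A_xy e = (A (delta_y e))(x) vanish for d(x,y) > r *)
Definition is_band_op (d : X -> X -> R) (p : R) (T : (X -> E) -> (X -> E)) : Prop :=
  is_bounded_op p T /\
  exists r, forall x y, r < d x y -> forall e, T (delta d y e) x = bzero.

End Lp.

Definition Esum {E : CBanach} (l : list E) : E := fold_right badd bzero l.

From Stdlib Require Import Reals List Permutation Lra Classical ClassicalDescription
  FunctionalExtensionality.
From Stdlib Require ClassicalEpsilon.
Open Scope R_scope.

(* Since 1/p + 1/q = 1, the weight phi_i^(p/q) is phi_i^(p-1).  Put A f x := the finite sum,
   over the i in J with phi_i(x) <> 0, of phi_i(x)^(p-1) (B_i (phi_i f))(x).  As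
   sum_i phi_i(x)^p = 1, the tangent-line inequality for t |-> t^p gives the weighted Hoelder
   inequality |sum_i phi_i(x)^(p-1) v_i|^p <= sum_i |v_i|^p at every point x.  Summing over x
   and exchanging the order of summation,
     |A f|_p^p <= sum_i |B_i (phi_i f)|_p^p <= M^p sum_i |phi_i f|_p^p <= M^p |f|_p^p.
   The same estimate, applied to the indices missing from a finite partial sum, bounds the
   error by M^p times the mass of f outside a finite set of points: this is the strong
   convergence.  A is banded because the supports of the phi_i have bounded diameter. *)

Lemma rpow_pos x a : 0 < x -> rpow x a = Rpower x a.
Proof. intros H; unfold rpow; destruct (Rlt_dec 0 x); [reflexivity | lra]. Qed.

Lemma rpow_0 a : rpow 0 a = 0.
Proof. unfold rpow; destruct (Rlt_dec 0 0); [lra | reflexivity]. Qed.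

Lemma rpow_ge0 x a : 0 <= rpow x a.
Proof. unfold rpow; destruct (Rlt_dec 0 x); [left; apply exp_pos | lra]. Qed.

Lemma rpow_gt0 x a : 0 < x -> 0 < rpow x a.
Proof. intros H; rewrite rpow_pos by lra; apply exp_pos. Qed.

Lemma rpow_mult x y a : 0 <= x -> 0 <= y -> rpow (x * y) a = rpow x a * rpow y a.
Proof.
  intros [Hx | <-] [Hy | <-]; rewrite ?Rmult_0_l, ?Rmult_0_r, ?rpow_0; try ring.
  rewrite !rpow_pos by nra. symmetry; apply Rpower_mult_distr; lra.
Qed.

Lemma rpow_rpow x a b : 0 <= x -> rpow (rpow x a) b = rpow x (a * b).
Proof.
  intros [Hx | <-]; [|rewrite !rpow_0; reflexivity].
  rewrite (rpow_pos x a), rpow_pos, rpow_pos by (try apply exp_pos; lra).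
  apply Rpower_mult.
Qed.

Lemma rpow_1 x : 0 <= x -> rpow x 1 = x.
Proof. intros [Hx | <-]; [rewrite rpow_pos by lra; apply Rpower_1; lra | apply rpow_0]. Qed.

Lemma rpow_split x a : 0 <= x -> rpow x a = rpow x (a - 1) * x.
Proof.
  intros [Hx | <-]; [|rewrite !rpow_0; ring].
  rewrite !rpow_pos by lra. rewrite <- (Rpower_1 x) at 3 by lra.
  rewrite <- Rpower_plus. f_equal; ring.
Qed.

Lemma rpow_lt x y a : 0 < a -> 0 <= x < y -> rpow x a < rpow y a.
Proof.
  intros Ha [[Hx | <-] Hxy]; [|rewrite rpow_0; apply rpow_gt0; lra].
  rewrite !rpow_pos by lra. apply exp_increasing.
  apply Rmult_lt_compat_l; [lra | apply ln_increasing; lra].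
Qed.

Lemma rpow_le x y a : 0 < a -> 0 <= x <= y -> rpow x a <= rpow y a.
Proof. intros Ha [Hx [Hxy | <-]]; [left; apply rpow_lt; lra | lra]. Qed.

Lemma rpow_K x a : a <> 0 -> 0 <= x -> rpow (rpow x a) (/ a) = x.
Proof. intros Ha Hx. rewrite rpow_rpow, Rinv_r by auto. apply rpow_1, Hx. Qed.

Lemma rpow_Kv x a : a <> 0 -> 0 <= x -> rpow (rpow x (/ a)) a = x.
Proof. intros Ha Hx. rewrite rpow_rpow, Rinv_l by auto. apply rpow_1, Hx. Qed.

Lemma exp_le_exp x y : x <= y -> exp x <= exp y.
Proof. intros [H | <-]; [left; apply exp_increasing, H | right; reflexivity]. Qed.

(* The minimum of [s |-> exp (p s) - p exp s] is attained at [s = 0]. *)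
Lemma exp_bernoulli p t : 1 <= p -> 1 + p * (exp t - 1) <= exp (p * t).
Proof.
  intros Hp.
  set (h := fun s => exp (p * s) - p * exp s).
  assert (Hd : forall s, derivable_pt_lim h s (p * (exp (p * s) - exp s))).
  { intros s. replace (p * (exp (p * s) - exp s)) with (exp (p * s) * p - p * exp s) by ring.
    apply (derivable_pt_lim_minus (fun s => exp (p * s)) (fun s => p * exp s)).
    - apply (derivable_pt_lim_comp (fun s => p * s) exp); [|apply derivable_pt_lim_exp].
      pose proof (derivable_pt_lim_scal id p s 1 (derivable_pt_lim_id s)) as H.
      rewrite Rmult_1_r in H. exact H.
    - exact (derivable_pt_lim_scal exp p s _ (derivable_pt_lim_exp s)). }
  destruct (Rtotal_order 0 t) as [Ht | [<- | Ht]].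
  - destruct (MVT_cor2 h _ 0 t Ht (fun c _ => Hd c)) as [c [Hc [Hc0 _]]].
    assert (exp c <= exp (p * c)) by (apply exp_le_exp; nra).
    assert (0 <= p * (exp (p * c) - exp c) * (t - 0)) by (apply Rmult_le_pos; nra).
    unfold h in Hc. rewrite Rmult_0_r, exp_0 in Hc. lra.
  - rewrite Rmult_0_r, exp_0. lra.
  - destruct (MVT_cor2 h _ t 0 Ht (fun c _ => Hd c)) as [c [Hc [_ Hc0]]].
    assert (exp (p * c) <= exp c) by (apply exp_le_exp; nra).
    assert (0 <= p * (exp c - exp (p * c)) * (0 - t)) by (apply Rmult_le_pos; nra).
    unfold h in Hc. rewrite Rmult_0_r, exp_0 in Hc. lra.
Qed.

Lemma bernoulli u p : 1 <= p -> 0 <= u -> 1 + p * (u - 1) <= rpow u p.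
Proof.
  intros Hp [Hu | <-]; [|rewrite rpow_0; lra].
  rewrite rpow_pos by lra. rewrite <- (exp_ln u) at 1 by lra. apply exp_bernoulli, Hp.
Qed.

Lemma rpow_tangent x y p : 1 <= p -> 0 <= x -> 0 <= y ->
  rpow y p + p * rpow y (p - 1) * (x - y) <= rpow x p.
Proof.
  intros Hp Hx [Hy | <-]; [|rewrite !rpow_0, Rplus_0_l, Rmult_0_r, Rmult_0_l; apply rpow_ge0].
  set (u := x / y).
  assert (Hu : 0 <= u)
    by (unfold u; apply Rmult_le_pos; [lra | left; apply Rinv_0_lt_compat; lra]).
  assert (Ex : x = u * y) by (unfold u; field; lra).
  rewrite Ex, rpow_mult, (rpow_split y p) by lra.
  assert (0 <= rpow y (p - 1) * y) by (apply Rmult_le_pos; [apply rpow_ge0 | lra]).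
  assert (0 <= (rpow y (p - 1) * y) * (rpow u p - (1 + p * (u - 1))))
    by (apply Rmult_le_pos; [|pose proof (bernoulli u p Hp Hu)]; lra).
  nra.
Qed.

Definition lsum {T : Type} (f : T -> R) (l : list T) : R := Rsum_list (map f l).

Section FiniteSums.
Context {T : Type}.
Implicit Types (f g : T -> R) (l : list T).

Lemma lsum_nil f : lsum f nil = 0.
Proof. reflexivity. Qed.

Lemma lsum_cons f a l : lsum f (a :: l) = f a + lsum f l.
Proof. reflexivity. Qed.

Lemma lsum_app f l1 l2 : lsum f (l1 ++ l2) = lsum f l1 + lsum f l2.
Proof. induction l1 as [|a l1 IH]; cbn [app]; rewrite ?lsum_nil, ?lsum_cons, ?IH; ring. Qed.

Lemma lsum_perm f l l' : Permutation l l' -> lsum f l = lsum f l'.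
Proof. induction 1; rewrite ?lsum_cons; lra. Qed.

Lemma lsum_le f g l : (forall x, In x l -> f x <= g x) -> lsum f l <= lsum g l.
Proof.
  induction l as [|a l IH]; intros H; rewrite ?lsum_nil, ?lsum_cons; [lra|].
  apply Rplus_le_compat; [apply H; left; reflexivity | apply IH; intros; apply H; right; auto].
Qed.

Lemma lsum_ext f g l : (forall x, In x l -> f x = g x) -> lsum f l = lsum g l.
Proof. intros H; apply Rle_antisym; apply lsum_le; intros x Hx; rewrite H by auto; lra. Qed.

Lemma lsum_eq0 f l : (forall x, In x l -> f x = 0) -> lsum f l = 0.
Proof.
  induction l as [|a l IH]; intros H; rewrite ?lsum_nil, ?lsum_cons; [reflexivity|].
  rewrite H, IH; [ring | intros; apply H; right; auto | left; reflexivity].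
Qed.

Lemma lsum_ge0 f l : (forall x, In x l -> 0 <= f x) -> 0 <= lsum f l.
Proof. intros H. rewrite <- (lsum_eq0 (fun _ => 0) l) by reflexivity. apply lsum_le, H. Qed.

Lemma lsum_add f g l : lsum (fun x => f x + g x) l = lsum f l + lsum g l.
Proof. induction l as [|a l IH]; rewrite ?lsum_nil, ?lsum_cons, ?IH; ring. Qed.

Lemma lsum_scal c f l : lsum (fun x => c * f x) l = c * lsum f l.
Proof. induction l as [|a l IH]; rewrite ?lsum_nil, ?lsum_cons, ?IH; ring. Qed.

Lemma lsum_incl f l1 l2 : NoDup l1 -> NoDup l2 -> incl l1 l2 ->
  (forall x, In x l2 -> 0 <= f x) -> lsum f l1 <= lsum f l2.
Proof.
  revert l2; induction l1 as [|a l1 IH]; intros l2 N1 N2 Hi Hf; [apply lsum_ge0, Hf|].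
  apply NoDup_cons_iff in N1 as [Na N1].
  destruct (in_split a l2) as [la [lb ->]]; [apply Hi; left; reflexivity|].
  rewrite <- (lsum_perm f _ _ (Permutation_middle la lb a)), !lsum_cons.
  apply NoDup_remove in N2 as [N2 _].
  apply Rplus_le_compat_l, IH; auto.
  - intros x Hx. specialize (Hi x (or_intror Hx)).
    apply in_app_or in Hi as [H | [<- | H]]; [apply in_or_app; auto | contradiction |
      apply in_or_app; auto].
  - intros x Hx; apply Hf, in_or_app. apply in_app_or in Hx as [H | H]; auto; right; right; auto.
Qed.

End FiniteSums.

Lemma lsum_exchange {T U : Type} (a : T -> U -> R) (l : list T) (m : list U) :
  lsum (fun t => lsum (a t) m) l = lsum (fun u => lsum (fun t => a t u) l) m.
Proof.
  induction l as [|t l IH]; rewrite ?lsum_nil, ?lsum_cons.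
  - symmetry; apply lsum_eq0; reflexivity.
  - rewrite IH, <- lsum_add. reflexivity.
Qed.

(* Hoelder's inequality with weights of total p-mass at most 1, obtained by summing the
   tangent-line inequality at the points [y = w_i s]. *)
Lemma lsum_holder {T : Type} (w a : T -> R) (l : list T) p : 1 <= p ->
  (forall i, In i l -> 0 <= w i) -> (forall i, In i l -> 0 <= a i) ->
  lsum (fun i => rpow (w i) p) l <= 1 ->
  rpow (lsum (fun i => rpow (w i) (p - 1) * a i) l) p <= lsum (fun i => rpow (a i) p) l.
Proof.
  intros Hp Hw Ha HW.
  set (s := lsum (fun i => rpow (w i) (p - 1) * a i) l).
  assert (Hs : 0 <= s) by (apply lsum_ge0; intros; apply Rmult_le_pos; [apply rpow_ge0 | auto]).
  set (S := rpow s p). set (S1 := rpow s (p - 1)). set (W := lsum (fun i => rpow (w i) p) l) in HW.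
  assert (ES : S = S1 * s) by apply rpow_split, Hs.
  eapply Rle_trans;
    [|apply lsum_le; intros i Hi; apply (rpow_tangent (a i) (w i * s) p); auto;
      apply Rmult_le_pos; auto].
  rewrite (lsum_ext _
     (fun i => (S - p * S) * rpow (w i) p + (p * S1) * (rpow (w i) (p - 1) * a i))).
  2: { intros i Hi. rewrite !rpow_mult, (rpow_split (w i) p) by auto. fold S S1.
       rewrite ES; ring. }
  rewrite lsum_add, !lsum_scal. fold s W.
  assert (0 <= W) by (apply lsum_ge0; intros; apply rpow_ge0).
  assert (0 <= S) by apply rpow_ge0.
  assert (0 <= S * ((p - 1) * (1 - W))) by (apply Rmult_le_pos; [|apply Rmult_le_pos]; lra).
  replace (p * S1 * s) with (p * S) by (rewrite ES; ring). nra.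
Qed.

Definition restrict {T : Type} (P : T -> Prop) (l : list T) : list T :=
  nodup (fun x y => excluded_middle_informative (x = y))
    (filter (fun t => if excluded_middle_informative (P t) then true else false) l).

Section Restrict.
Context {T : Type}.

Lemma restrict_NoDup (P : T -> Prop) l : NoDup (restrict P l).
Proof. apply NoDup_nodup. Qed.

Lemma in_restrict (P : T -> Prop) l t : In t (restrict P l) <-> In t l /\ P t.
Proof.
  unfold restrict. rewrite nodup_In, filter_In.
  destruct (excluded_middle_informative (P t)); intuition discriminate.
Qed.

Lemma restrict_partition (P : T -> Prop) l : NoDup l ->
  Permutation l (restrict P l ++ restrict (fun t => ~ P t) l).
Proof.
  intros N. apply NoDup_Permutation; auto.
  - apply NoDup_app; try apply restrict_NoDup.
    intros a A1 A2. apply in_restrict in A1, A2. tauto.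
  - intros x. rewrite in_app_iff, !in_restrict. destruct (classic (P x)); tauto.
Qed.

End Restrict.

Section BanachFacts.
Context {E : CBanach}.
Implicit Types (u v : E).

Lemma badd0l u : badd bzero u = u.
Proof. rewrite badd_comm; apply badd_zero. Qed.

Lemma badd_idem_eq0 v : badd v v = v -> v = bzero.
Proof.
  intros H.
  assert (Hv : badd (badd v v) (bopp v) = v) by (rewrite <- badd_assoc, badd_opp; apply badd_zero).
  rewrite H, badd_opp in Hv. symmetry; exact Hv.
Qed.

Lemma bscal0l u : bscal (RtoC 0) u = bzero.
Proof.
  apply badd_idem_eq0. rewrite <- bscal_adds. f_equal. unfold Cadd, RtoC; cbn; f_equal; ring.
Qed.

Lemma bscal0r c : bscal c (@bzero E) = bzero.
Proof. apply badd_idem_eq0. rewrite <- bscal_addv, badd_zero. reflexivity. Qed.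

Lemma bopp_unique u v : badd u v = bzero -> v = bopp u.
Proof.
  intros H. rewrite <- (badd_zero _ v), <- (badd_opp _ u), badd_assoc, (badd_comm _ v u), H.
  apply badd0l.
Qed.

Lemma bopp_badd u v : bopp (badd u v) = badd (bopp u) (bopp v).
Proof.
  symmetry; apply bopp_unique.
  rewrite badd_assoc, (badd_comm _ u v), <- (badd_assoc _ v u), badd_opp, badd_zero, badd_opp.
  reflexivity.
Qed.

Lemma bscalR_comm r c v : bscal (RtoC r) (bscal c v) = bscal c (bscal (RtoC r) v).
Proof. rewrite <- !bscal_mul. f_equal. destruct c; unfold Cmul, RtoC; cbn; f_equal; ring. Qed.

Lemma Cabs_RtoC r : Cabs (RtoC r) = Rabs r.
Proof.
  unfold Cabs, RtoC; cbn [Cre Cim].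
  replace (r ^ 2 + 0 ^ 2) with (Rsqr r) by (unfold Rsqr; ring). apply sqrt_Rsqr_abs.
Qed.

Lemma bnorm_bscalR r u : bnorm (bscal (RtoC r) u) = Rabs r * bnorm u.
Proof. rewrite bnorm_scal, Cabs_RtoC. reflexivity. Qed.

Lemma bnorm0 : bnorm (@bzero E) = 0.
Proof. rewrite <- (bscal0l bzero), bnorm_bscalR, Rabs_R0. ring. Qed.

Lemma bnorm_opp u : bnorm (bopp u) = bnorm u.
Proof.
  assert (Hopp : bopp u = bscal (RtoC (-1)) u).
  { symmetry; apply bopp_unique. rewrite <- (bscal_one _ u) at 1. rewrite <- bscal_adds.
    replace (Cadd (RtoC 1) (RtoC (-1))) with (RtoC 0) by (unfold Cadd, RtoC; cbn; f_equal; ring).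
    apply bscal0l. }
  rewrite Hopp, bnorm_bscalR, Rabs_left by lra. ring.
Qed.

Lemma bnorm_ge0 u : 0 <= bnorm u.
Proof.
  pose proof (bnorm_triangle _ u (bopp u)) as H. rewrite badd_opp, bnorm0, bnorm_opp in H. lra.
Qed.

Lemma bnorm_Esum_le (l : list E) : bnorm (Esum l) <= Rsum_list (map bnorm l).
Proof.
  induction l as [|u l IH]; simpl; [rewrite bnorm0; lra|].
  eapply Rle_trans; [apply bnorm_triangle | lra].
Qed.

Lemma Esum_perm (l l' : list E) : Permutation l l' -> Esum l = Esum l'.
Proof.
  induction 1; simpl; try congruence.
  rewrite !badd_assoc, (badd_comm _ y x). reflexivity.
Qed.

Lemma Esum_app (l1 l2 : list E) : Esum (l1 ++ l2) = badd (Esum l1) (Esum l2).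
Proof. induction l1; simpl; [rewrite badd0l | rewrite IHl1, badd_assoc]; reflexivity. Qed.

Lemma Esum_eq0 (l : list E) : (forall u, In u l -> u = bzero) -> Esum l = bzero.
Proof.
  induction l; simpl; intros H; [reflexivity|].
  rewrite (H a), IHl by auto. apply badd_zero.
Qed.

Lemma Esum_badd {T : Type} (f g : T -> E) l :
  Esum (map (fun i => badd (f i) (g i)) l) = badd (Esum (map f l)) (Esum (map g l)).
Proof.
  induction l; simpl; [rewrite badd_zero; reflexivity|]. rewrite IHl, !badd_assoc. f_equal.
  rewrite <- !badd_assoc. f_equal. apply badd_comm.
Qed.

Lemma Esum_bscal {T : Type} c (f : T -> E) l :
  Esum (map (fun i => bscal c (f i)) l) = bscal c (Esum (map f l)).
Proof. induction l; simpl; [rewrite bscal0r | rewrite IHl, bscal_addv]; reflexivity. Qed.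

Lemma bnorm_Esum_sub {T : Type} (h : T -> E) (F L : list T) : NoDup F -> NoDup L ->
  (forall i, In i F -> ~ In i L -> h i = bzero) ->
  bnorm (badd (Esum (map h F)) (bopp (Esum (map h L))))
  = bnorm (Esum (map h (restrict (fun i => ~ In i F) L))).
Proof.
  intros NF NL Hout.
  rewrite (Esum_perm _ _ (Permutation_map h (restrict_partition (fun i => In i L) F NF))),
    (Esum_perm _ _ (Permutation_map h (restrict_partition (fun i => In i F) L NL))),
    !map_app, !Esum_app.
  rewrite (Esum_eq0 (map h (restrict (fun i => ~ In i L) F))), badd_zero.
  2: { intros u Hu. apply in_map_iff in Hu as [i [<- Hi]].
       apply in_restrict in Hi as [Hi HiL]. apply Hout; auto. }
  rewrite (Esum_perm (map h (restrict (fun i => In i L) F))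
                     (map h (restrict (fun i => In i F) L))).
  2: { apply Permutation_map, NoDup_Permutation; try apply restrict_NoDup.
       intros i; rewrite !in_restrict; tauto. }
  rewrite bopp_badd, badd_assoc, badd_opp, badd0l. apply bnorm_opp.
Qed.

End BanachFacts.

Lemma Rsup_spec (S : R -> Prop) : bound S -> (exists x, S x) -> is_lub S (Rsup S).
Proof.
  intros Hb Hne. unfold Rsup.
  destruct (excluded_middle_informative (bound S /\ exists x, S x)) as [h | h];
    [apply proj2_sig | tauto].
Qed.

Section LpPower.
Context {E : CBanach} {X : Type}.
Variable p : R.
Hypothesis p_gt0 : 0 < p.
Implicit Types (f g : X -> E).

Definition lp_pow g : R := Rsup (lp_sums p g).
Definition pow_norm g (x : X) : R := rpow (bnorm (g x)) p.

Lemma lp_sums_nil g : lp_sums p g 0.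
Proof. exists nil; split; [constructor | reflexivity]. Qed.

Lemma lp_pow_ge0 g : 0 <= lp_pow g.
Proof.
  unfold lp_pow, Rsup.
  destruct (excluded_middle_informative (bound (lp_sums p g) /\ exists x, lp_sums p g x))
    as [h | h]; [|lra].
  apply (proj2_sig (completeness _ (proj1 h) (proj2 h))), lp_sums_nil.
Qed.

Lemma lsum_le_lp_pow g l : in_lp p g -> NoDup l -> lsum (pow_norm g) l <= lp_pow g.
Proof. intros H N. apply (Rsup_spec _ H (ex_intro _ _ (lp_sums_nil g))). exists l; auto. Qed.

Lemma lp_pow_le g c : (forall l, NoDup l -> lsum (pow_norm g) l <= c) ->
  in_lp p g /\ lp_pow g <= c.
Proof.
  intros H.
  assert (Hb : in_lp p g) by (exists c; intros s [l [N ->]]; apply H, N).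
  split; [exact Hb|].
  apply (Rsup_spec _ Hb (ex_intro _ _ (lp_sums_nil g))). intros s [l [N ->]]. apply H, N.
Qed.

Lemma lp_pow_approx g d : in_lp p g -> 0 < d ->
  exists l, NoDup l /\ lp_pow g - d < lsum (pow_norm g) l.
Proof.
  intros H Hd. apply NNPP; intros C.
  assert (Hub : is_upper_bound (lp_sums p g) (lp_pow g - d)).
  { intros s [l [N ->]]. apply Rnot_lt_le. intros L. apply C. exists l; auto. }
  pose proof (proj2 (Rsup_spec _ H (ex_intro _ _ (lp_sums_nil g))) _ Hub).
  unfold lp_pow in *. lra.
Qed.

Lemma lp_norm_le_of_pow f g M : 0 <= M ->
  lp_pow g <= rpow M p * lp_pow f -> lp_norm p g <= M * lp_norm p f.
Proof.
  intros HM H. unfold lp_norm. fold (lp_pow g) (lp_pow f).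
  assert (0 < / p) by (apply Rinv_0_lt_compat, p_gt0).
  eapply Rle_trans; [apply rpow_le; [auto | split; [apply lp_pow_ge0 | exact H]]|].
  rewrite rpow_mult, rpow_K by (lra || apply rpow_ge0 || apply lp_pow_ge0). lra.
Qed.

Lemma lp_pow_le_of_norm f g M : 0 <= M ->
  lp_norm p g <= M * lp_norm p f -> lp_pow g <= rpow M p * lp_pow f.
Proof.
  intros HM H. unfold lp_norm in H. fold (lp_pow g) (lp_pow f) in H.
  rewrite <- (rpow_Kv (lp_pow g) p), <- (rpow_Kv (lp_pow f) p), <- rpow_mult
    by (lra || apply rpow_ge0 || apply lp_pow_ge0).
  apply rpow_le; [exact p_gt0 | split; [apply rpow_ge0 | exact H]].
Qed.

Lemma lp_norm_lt_of_pow g eps : 0 < eps -> lp_pow g < rpow eps p -> lp_norm p g < eps.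
Proof.
  intros He H. unfold lp_norm. fold (lp_pow g).
  rewrite <- (rpow_K eps p) by lra.
  apply rpow_lt; [apply Rinv_0_lt_compat, p_gt0 | split; [apply lp_pow_ge0 | exact H]].
Qed.

Lemma lp_dominated f g : (forall x, bnorm (g x) <= bnorm (f x)) -> in_lp p f ->
  in_lp p g /\ lp_pow g <= lp_pow f.
Proof.
  intros H Hf. apply lp_pow_le. intros l N.
  eapply Rle_trans; [|apply (lsum_le_lp_pow f l Hf N)].
  apply lsum_le. intros x _. apply rpow_le; [exact p_gt0 | split; [apply bnorm_ge0 | auto]].
Qed.

Lemma mult_op_in_lp (h : X -> R) f : (forall x, 0 <= h x <= 1) -> in_lp p f ->
  in_lp p (mult_op h f).
Proof.
  intros Hh Hf. apply (lp_dominated f); auto. intros x.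
  unfold mult_op. rewrite bnorm_bscalR, Rabs_pos_eq by apply Hh.
  pose proof (bnorm_ge0 (f x)). destruct (Hh x). nra.
Qed.

Lemma pow_norm_mult_op (h : X -> R) f x : 0 <= h x ->
  pow_norm (mult_op h f) x = rpow (h x) p * pow_norm f x.
Proof.
  intros H. unfold pow_norm, mult_op. rewrite bnorm_bscalR, Rabs_pos_eq by auto.
  apply rpow_mult; [auto | apply bnorm_ge0].
Qed.

Lemma zero_in_lp : in_lp p (fun _ : X => @bzero E).
Proof.
  apply (lp_pow_le _ 0). intros l _. right. apply lsum_eq0. intros x _.
  unfold pow_norm. rewrite bnorm0. apply rpow_0.
Qed.

Lemma bounded_op_zero (A : (X -> E) -> (X -> E)) x : is_bounded_op p A ->
  A (fun _ => bzero) x = bzero.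
Proof.
  intros [_ [_ [Hhom _]]].
  replace (fun _ : X => @bzero E) with (fscal (RtoC 0) (fun _ : X => @bzero E))
    by (apply functional_extensionality; intros z; apply bscal0l).
  rewrite Hhom by apply zero_in_lp. apply bscal0l.
Qed.

Lemma lsum_lp_pow_approx {I : Type} (h : I -> X -> E) (U : list I) d :
  (forall i, In i U -> in_lp p (h i)) -> 0 < d ->
  exists T, NoDup T /\ forall T', NoDup T' -> incl T T' ->
    lsum (fun i => lp_pow (h i)) U <= lsum (fun i => lsum (pow_norm (h i)) T') U + d.
Proof.
  revert d; induction U as [|a U IH]; intros d Hl Hd.
  - exists nil; split; [constructor|]. intros. cbn. lra.
  - destruct (IH (d / 2)) as [T1 [N1 H1]]; [intros; apply Hl; right; auto | lra |].
    destruct (lp_pow_approx (h a) (d / 2)) as [S [NS HS]]; [apply Hl; left; auto | lra |].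
    exists (restrict (fun _ => True) (S ++ T1)); split; [apply restrict_NoDup|].
    intros T' NT' Hi.
    assert (Hsub : forall z, In z (S ++ T1) -> In z T').
    { intros z Hz. apply Hi, in_restrict. auto. }
    rewrite !lsum_cons.
    pose proof (H1 T' NT' (fun z Hz => Hsub z (in_or_app _ _ _ (or_intror Hz)))).
    assert (lsum (pow_norm (h a)) S <= lsum (pow_norm (h a)) T').
    { apply lsum_incl; auto; [intros z Hz; apply Hsub, in_or_app; auto | intros; apply rpow_ge0]. }
    lra.
Qed.

Lemma lsum_lp_pow_le {I : Type} (h : I -> X -> E) (U : list I) c :
  (forall i, In i U -> in_lp p (h i)) ->
  (forall T, NoDup T -> lsum (fun i => lsum (pow_norm (h i)) T) U <= c) ->
  lsum (fun i => lp_pow (h i)) U <= c.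
Proof.
  intros Hl H. apply Rnot_lt_le; intros C.
  set (d := (lsum (fun i => lp_pow (h i)) U - c) / 2).
  destruct (lsum_lp_pow_approx h U d Hl ltac:(unfold d; lra)) as [T [NT HT]].
  pose proof (HT T NT (incl_refl _)). pose proof (H T NT). unfold d in *. lra.
Qed.

End LpPower.

Lemma bnorm_weighted_sum_le {E : CBanach} {T : Type} (w : T -> R) (v : T -> E) l p :
  1 <= p -> (forall i, 0 <= w i) -> lsum (fun i => rpow (w i) p) l <= 1 ->
  rpow (bnorm (Esum (map (fun i => bscal (RtoC (rpow (w i) (p - 1))) (v i)) l))) p
    <= lsum (fun i => rpow (bnorm (v i)) p) l.
Proof.
  intros Hp Hw H1.
  eapply Rle_trans; [|apply lsum_holder; auto; intros; apply bnorm_ge0].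
  apply rpow_le; [lra | split; [apply bnorm_ge0|]].
  eapply Rle_trans; [apply bnorm_Esum_le|]. rewrite map_map. right. apply lsum_ext.
  intros i _. rewrite bnorm_bscalR, Rabs_pos_eq by apply rpow_ge0. reflexivity.
Qed.

Lemma lsum_le_exchange {T U : Type} (S : list T) (G : T -> list U) (a : U -> T -> R)
    (g : T -> R) c :
  NoDup S -> (forall x, NoDup (G x)) -> (forall i x, 0 <= a i x) ->
  (forall x, In x S -> g x <= lsum (fun i => a i x) (G x)) ->
  (forall V, NoDup V -> (forall i, In i V -> exists x, In x S /\ In i (G x)) ->
     lsum (fun i => lsum (a i) S) V <= c) ->
  lsum g S <= c.
Proof.
  intros NS NG Ha Hg HV.
  set (V := restrict (fun _ => True) (flat_map G S)).
  eapply Rle_trans; [|apply (HV V (restrict_NoDup _ _))].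
  - rewrite <- lsum_exchange. apply lsum_le. intros x Hx.
    eapply Rle_trans; [apply Hg, Hx|].
    apply lsum_incl; [apply NG | apply restrict_NoDup | intros i Hi | intros; apply Ha].
    apply in_restrict. split; [apply in_flat_map; eauto | trivial].
  - intros i Hi. apply in_restrict in Hi as [Hi _]. apply in_flat_map in Hi as [x [H1 H2]]. eauto.
Qed.

Section PartitionedSum.
Variables (X I : Type) (E : CBanach) (p M : R).
Variables (phi : I -> X -> R) (J : I -> Prop) (B : I -> (X -> E) -> (X -> E)).
Variable cover : X -> list I.
Hypothesis p_gt1 : 1 < p.
Hypothesis phi_range : forall i x, 0 <= phi i x <= 1.
Hypothesis cover_support : forall x i, phi i x <> 0 -> In i (cover x).
Hypothesis phi_pow_sum : forall x l, NoDup l -> (forall i, phi i x <> 0 -> In i l) ->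
  lsum (fun i => rpow (phi i x) p) l = 1.
Hypothesis M_ge0 : 0 <= M.
Hypothesis B_bounded : forall i, J i -> is_bounded_op p (B i).
Hypothesis B_norm : forall i, J i -> op_norm_le p (B i) M.

Let p_gt0 : 0 < p. Proof. lra. Qed.

Lemma phi_pow_lsum_le1 x U : NoDup U -> lsum (fun i => rpow (phi i x) p) U <= 1.
Proof.
  intros NU.
  set (W := restrict (fun i => ~ In i U) (cover x)).
  assert (NUW : NoDup (U ++ W)).
  { apply NoDup_app; [auto | apply restrict_NoDup |].
    intros i Hi HiW. apply in_restrict in HiW. tauto. }
  assert (Hall : forall i, phi i x <> 0 -> In i (U ++ W)).
  { intros i Hi. apply in_or_app. destruct (classic (In i U)); [auto|].
    right; apply in_restrict; auto. }
  pose proof (phi_pow_sum x _ NUW Hall) as Hsum. rewrite lsum_app in Hsum.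
  pose proof (lsum_ge0 (fun i => rpow (phi i x) p) W (fun _ _ => rpow_ge0 _ _)). lra.
Qed.

Lemma lsum_lp_pow_mult_phi_le (f : X -> E) (U : list I) (T0 : list X) :
  in_lp p f -> NoDup U -> NoDup T0 -> (forall i x, In i U -> In x T0 -> phi i x = 0) ->
  lsum (fun i => lp_pow p (mult_op (phi i) f)) U <= lp_pow p f - lsum (pow_norm p f) T0.
Proof.
  intros Hf NU N0 Hz.
  apply lsum_lp_pow_le; [intros; apply mult_op_in_lp; auto|].
  intros T NT.
  set (R2 := restrict (fun x => ~ In x T0) T).
  assert (NW : NoDup (T0 ++ R2)).
  { apply NoDup_app; [auto | apply restrict_NoDup |].
    intros x A1 A2. apply in_restrict in A2. tauto. }
  set (a := fun i => pow_norm p (mult_op (phi i) f)).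
  assert (S1 : lsum (fun i => lsum (a i) T) U <= lsum (fun i => lsum (a i) (T0 ++ R2)) U).
  { apply lsum_le. intros i _. apply lsum_incl; auto; [|intros; apply rpow_ge0].
    intros x Hx. apply in_or_app. destruct (classic (In x T0)); [auto|].
    right; apply in_restrict; auto. }
  rewrite (lsum_exchange a U (T0 ++ R2)), lsum_app in S1.
  assert (S2 : lsum (fun x => lsum (fun i => a i x) U) T0 = 0).
  { apply lsum_eq0. intros x Hx. apply lsum_eq0. intros i Hi.
    unfold a. rewrite pow_norm_mult_op, (Hz i x Hi Hx), rpow_0 by apply phi_range. ring. }
  assert (S3 : lsum (fun x => lsum (fun i => a i x) U) R2 <= lsum (pow_norm p f) R2).
  { apply lsum_le. intros x _. unfold a.
    rewrite (lsum_ext _ (fun i => pow_norm p f x * rpow (phi i x) p))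
      by (intros; rewrite pow_norm_mult_op by apply phi_range; ring).
    rewrite lsum_scal. pose proof (rpow_ge0 (bnorm (f x)) p).
    pose proof (phi_pow_lsum_le1 x U NU). unfold pow_norm. nra. }
  pose proof (lsum_le_lp_pow p f _ Hf NW) as S4. rewrite lsum_app in S4.
  change (lsum (fun i => lsum (a i) T) U <= lp_pow p f - lsum (pow_norm p f) T0). lra.
Qed.

Definition summand (f : X -> E) (i : I) : X -> E :=
  mult_op (fun y => rpow (phi i y) (p - 1)) (B i (mult_op (phi i) f)).

Definition active (x : X) : list I := restrict (fun i => phi i x <> 0 /\ J i) (cover x).

Definition band_sum (f : X -> E) (x : X) : E := Esum (map (fun i => summand f i x) (active x)).

Lemma in_active x i : In i (active x) <-> phi i x <> 0 /\ J i.
Proof. unfold active. rewrite in_restrict. intuition. Qed.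

Lemma summandE f i x :
  summand f i x = bscal (RtoC (rpow (phi i x) (p - 1))) (B i (mult_op (phi i) f) x).
Proof. reflexivity. Qed.

Lemma summand_outside f i x : phi i x = 0 -> summand f i x = bzero.
Proof. intros H. rewrite summandE, H, rpow_0. apply bscal0l. Qed.

Lemma B_mult_phi_bound i f : J i -> in_lp p f ->
  in_lp p (B i (mult_op (phi i) f)) /\
  lp_pow p (B i (mult_op (phi i) f)) <= rpow M p * lp_pow p (mult_op (phi i) f).
Proof.
  intros Hj Hf. assert (Hm : in_lp p (mult_op (phi i) f)) by (apply mult_op_in_lp; auto).
  split; [apply (B_bounded i Hj), Hm|].
  apply lp_pow_le_of_norm; auto. apply B_norm; auto.
Qed.

Lemma partial_sum_lp_pow_le f (G : X -> list I) (T0 : list X) :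
  in_lp p f -> NoDup T0 -> (forall x, NoDup (G x)) -> (forall x i, In i (G x) -> J i) ->
  (forall x i y, In i (G x) -> In y T0 -> phi i y = 0) ->
  in_lp p (fun x => Esum (map (fun i => summand f i x) (G x))) /\
  lp_pow p (fun x => Esum (map (fun i => summand f i x) (G x)))
    <= rpow M p * (lp_pow p f - lsum (pow_norm p f) T0).
Proof.
  intros Hf N0 NG HGJ HGz.
  apply lp_pow_le. intros S NS.
  apply (lsum_le_exchange S G (fun i => pow_norm p (B i (mult_op (phi i) f)))); auto.
  - intros; apply rpow_ge0.
  - intros x _. apply bnorm_weighted_sum_le; [lra | intros; apply phi_range |].
    apply phi_pow_lsum_le1, NG.
  - intros U NU HU.
    assert (HUJ : forall i, In i U -> J i).
    { intros i Hi. destruct (HU i Hi) as [x [_ Hx]]. eapply HGJ; eauto. }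
    apply (Rle_trans _ (lsum (fun i => rpow M p * lp_pow p (mult_op (phi i) f)) U)).
    + apply lsum_le. intros i Hi. destruct (B_mult_phi_bound i f (HUJ i Hi) Hf) as [Hl Hb].
      eapply Rle_trans; [apply lsum_le_lp_pow; auto | exact Hb].
    + rewrite lsum_scal. apply Rmult_le_compat_l; [apply rpow_ge0|].
      apply lsum_lp_pow_mult_phi_le; auto.
      intros i y Hi Hy. destruct (HU i Hi) as [x [_ Hx]]. eapply HGz; eauto.
Qed.

Lemma band_sum_lp_pow_le f : in_lp p f ->
  in_lp p (band_sum f) /\ lp_pow p (band_sum f) <= rpow M p * lp_pow p f.
Proof.
  intros Hf.
  destruct (partial_sum_lp_pow_le f active nil Hf (NoDup_nil _)) as [Hl Hb].
  - intros; apply restrict_NoDup.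
  - intros x i Hi. apply in_active in Hi. tauto.
  - intros x i y _ [].
  - split; [exact Hl|]. rewrite Rminus_0_r in Hb. exact Hb.
Qed.

Lemma band_sum_op_norm_le : op_norm_le p band_sum M.
Proof. intros f Hf. apply lp_norm_le_of_pow; auto. apply band_sum_lp_pow_le, Hf. Qed.

Lemma band_sum_bounded : is_bounded_op p band_sum.
Proof.
  split; [intros f Hf; apply band_sum_lp_pow_le, Hf|].
  split; [|split; [|exists M; apply band_sum_op_norm_le]].
  - intros f g Hf Hg x. unfold band_sum. rewrite <- Esum_badd. f_equal.
    apply map_ext_in. intros i Hi. apply in_active in Hi as [_ Hj].
    destruct (B_bounded i Hj) as [_ [Hadd _]].
    rewrite !summandE.
    replace (mult_op (phi i) (fadd f g)) with (fadd (mult_op (phi i) f) (mult_op (phi i) g))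
      by (apply functional_extensionality; intros z; symmetry; apply bscal_addv).
    rewrite Hadd by (apply mult_op_in_lp; auto). apply bscal_addv.
  - intros c f Hf x. unfold band_sum. rewrite <- Esum_bscal. f_equal.
    apply map_ext_in. intros i Hi. apply in_active in Hi as [_ Hj].
    destruct (B_bounded i Hj) as [_ [_ [Hhom _]]].
    rewrite !summandE.
    replace (mult_op (phi i) (fscal c f)) with (fscal c (mult_op (phi i) f))
      by (apply functional_extensionality; intros z; symmetry; apply bscalR_comm).
    rewrite Hhom by (apply mult_op_in_lp; auto). apply bscalR_comm.
Qed.

Lemma band_sum_band (d : X -> X -> R) D :
  (forall x y, d x y = 0 -> x = y) ->
  (forall i x y, phi i x <> 0 -> phi i y <> 0 -> d x y <= D) ->
  forall x y, D < d x y -> forall e, band_sum (delta d y e) x = bzero.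
Proof.
  intros Hd0 Hdiam x y Hxy e. apply Esum_eq0. intros v Hv.
  apply in_map_iff in Hv as [i [<- Hi]]. apply in_active in Hi as [Hix Hj].
  assert (Hz : mult_op (phi i) (delta d y e) = fun _ => bzero).
  { apply functional_extensionality; intros z. unfold mult_op, delta.
    destruct (Req_EM_T (d z y) 0) as [Ezy | _]; [|apply bscal0r].
    apply Hd0 in Ezy as ->.
    replace (phi i y) with 0; [apply bscal0l|].
    apply NNPP; intros Hiy. pose proof (Hdiam i x y Hix (not_eq_sym Hiy)). lra. }
  rewrite summandE, Hz, (bounded_op_zero p) by auto. apply bscal0r.
Qed.

Lemma bnorm_partial_sum_sub f (F : list I) x : NoDup F -> (forall i, In i F -> J i) ->
  bnorm (fsub (fun x => Esum (map (fun i => summand f i x) F)) (band_sum f) x)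
  = bnorm (Esum (map (fun i => summand f i x) (restrict (fun i => ~ In i F) (active x)))).
Proof.
  intros NF HFJ. apply bnorm_Esum_sub; [exact NF | apply restrict_NoDup |].
  intros i HiF Hia. apply summand_outside, NNPP. intros Hix.
  apply Hia, in_active; auto.
Qed.

Lemma band_sum_strong_limit f : in_lp p f -> forall eps, 0 < eps ->
  exists F0 : list I, (forall i, In i F0 -> J i) /\
  forall F : list I, NoDup F -> (forall i, In i F -> J i) -> incl F0 F ->
    lp_norm p (fsub (fun x => Esum (map (fun i => summand f i x) F)) (band_sum f)) < eps.
Proof.
  intros Hf eps Heps.
  pose proof (rpow_gt0 eps p Heps) as He.
  pose proof (rpow_ge0 M p) as Hmp.
  set (dl := rpow eps p / (rpow M p + 1)).
  assert (Hdl : rpow M p * dl < rpow eps p).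
  { unfold dl. replace (rpow M p * (rpow eps p / (rpow M p + 1)))
      with (rpow eps p - rpow eps p / (rpow M p + 1)) by (field; lra).
    pose proof (Rdiv_lt_0_compat (rpow eps p) (rpow M p + 1) He ltac:(lra)). lra. }
  destruct (lp_pow_approx p f dl Hf ltac:(unfold dl; apply Rdiv_lt_0_compat; lra))
    as [T0 [N0 HT0]].
  (* Every index missing from an [F] containing [F0] vanishes on [T0]. *)
  exists (restrict (fun _ => True) (flat_map active T0)). split.
  { intros i Hi. apply in_restrict in Hi as [Hi _]. apply in_flat_map in Hi as [x [_ Hx]].
    apply in_active in Hx; tauto. }
  intros F NF HFJ Hinc.
  set (G := fun x => restrict (fun i => ~ In i F) (active x)).
  destruct (partial_sum_lp_pow_le f G T0 Hf N0) as [HGl HGb].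
  - intros; apply restrict_NoDup.
  - intros x i Hi. apply in_restrict, proj1, in_active in Hi. tauto.
  - intros x i y Hi Hy. apply in_restrict in Hi as [Hi HiF]. apply in_active in Hi as [_ Hj].
    apply NNPP; intros Hiy. apply HiF, Hinc, in_restrict. split; [|trivial].
    apply in_flat_map. exists y; split; auto. apply in_active; auto.
  - destruct (lp_dominated p p_gt0 (fun x => Esum (map (fun i => summand f i x) (G x))) _
                (fun x => Req_le _ _ (bnorm_partial_sum_sub f F x NF HFJ)) HGl) as [_ Hle].
    apply lp_norm_lt_of_pow; auto.
    pose proof (lsum_le_lp_pow p f T0 Hf N0).
    assert (rpow M p * (lp_pow p f - lsum (pow_norm p f) T0) <= rpow M p * dl)
      by (apply Rmult_le_compat_l; lra).
    lra.
Qed.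

End PartitionedSum.

Theorem lemma6p3 (X : Type) (d : X -> X -> R) (E : CBanach) (p q : R)
  (I : Type) (phi : I -> X -> R) (J : I -> Prop)
  (B : I -> (X -> E) -> (X -> E)) (M : R) :
  is_space X d ->
  1 < p -> / p + / q = 1 ->
  metric_p_partition X d p I phi ->
  (forall i, J i -> is_bounded_op p (B i)) ->
  0 <= M -> (forall i, J i -> op_norm_le p (B i) M) ->
  exists A : (X -> E) -> (X -> E),
    is_band_op d p A /\ op_norm_le p A M /\
    (forall f, in_lp p f -> forall eps, 0 < eps ->
       exists F0 : list I, (forall i, In i F0 -> J i) /\
       forall F : list I, NoDup F -> (forall i, In i F -> J i) -> incl F0 F ->
         lp_norm p
           (fsub (fun x => Esum (map (fun i =>
                    mult_op (fun y => rpow (phi i y) (p / q))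
                            (B i (mult_op (phi i) f)) x) F))
                 (A f)) < eps).
Proof.
  intros [_ [Hd0 _]] Hp Hpq [Hphi [[N Hcov] [[D Hdiam] Hsum]]] HB HM HBn.
  destruct (ClassicalEpsilon.choice (fun x l => forall i, phi i x <> 0 -> In i l))
    as [cover Hcover].
  { intros x. destruct (Hcov x) as [l [_ Hl]]. eauto. }
  replace (p / q) with (p - 1) by (unfold Rdiv; replace (/ q) with (1 - / p) by lra; field; lra).
  exists (band_sum X I E p phi J B cover). split; [split|split].
  - exact (band_sum_bounded X I E p M phi J B cover Hp Hphi Hcover Hsum HM HB HBn).
  - exists D. exact (band_sum_band X I E p phi J B cover Hcover HB d D
                       (fun x y => proj1 (Hd0 x y)) Hdiam).
  - exact (band_sum_op_norm_le X I E p M phi J B cover Hp Hphi Hcover Hsum HM HB HBn).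
  - exact (band_sum_strong_limit X I E p M phi J B cover Hp Hphi Hcover Hsum HM HB HBn).
Qed.
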